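(* Let $\gamma\in(\tfrac12,1]$ and $\varepsilon,\beta>0$. Then there exists a constant $c_2(\varepsilon,\beta,\gamma)$ such that for all $\xi_1\in\mathbb C$ and $\xi_2\in\mathbb R$ with $0\le\operatorname{Im}\xi_1\le1$, $|\xi_1|\ge\varepsilon$, $|\xi_2|\ge\varepsilon$, $|\operatorname{Re}\xi_1-\xi_2|\le\beta\operatorname{Im}\xi_1$, and for every $x\ge0$, $$\Big|e^{i\xi_1x}\int_0^x\frac{e^{-i\xi_1t}-e^{-i\xi_2t}}{(t+1)^\gamma}dt\Big|<\frac{c_2(\varepsilon,\beta,\gamma)}{(x+1)^\gamma}.$$ *)

From Stdlib Require Import Reals.
From Coquelicot Require Import Coquelicot.
Open Scope R_scope.

Definition Cexp (z : C) : C :=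
  (exp (Re z) * cos (Im z), exp (Re z) * sin (Im z)).

Definition CRInt (f : R -> C) (a b : R) : C :=
  (RInt (fun t => Re (f t)) a b, RInt (fun t => Im (f t)) a b).

(* With z1 = -i xi1 and z2 = -i xi2 the integrand is (t+1)^(-gamma) (e^(z1 t) - e^(z2 t)),
   and the prefactor e^(i xi1 x) = e^(-z1 x) has modulus e^(-b x), b = Im xi1.  Integrating
   by parts twice, against the primitives e^(z1 t)/z1 - e^(z2 t)/z2 and
   e^(z1 t)/z1^2 - e^(z2 t)/z2^2, leaves boundary terms of size O((x+1)^(-gamma)) and a
   remainder integral with weight (t+1)^(-gamma-2).  After damping, the second primitive is
   O((x+1)^(-gamma) (t+1)) pointwise: trivially for t >= x/2, and for t <= x/2 because
   e^(z1 (t - x)) is of size e^(-b x/2) while |z2 - z1| <= (beta + 1) b makes the two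
   exponentials differ by O(b t); the decay b e^(-b x/2) <= 2/(x+1) absorbs the factor b.
   The same cancellation controls the boundary term at t = 0. *)

From Stdlib Require Import Reals Lra.
From Coquelicot Require Import Coquelicot.
Open Scope R_scope.

Lemma is_derive_pair (f g : R -> R) (x df dg : R) :
  is_derive f x df -> is_derive g x dg ->
  is_derive (V := C_R_NormedModule) (fun t => (f t, g t) : C) x ((df, dg) : C).
Proof.
intros Hf Hg.
eapply filterdiff_ext_lin.
- apply (filterdiff_comp'_2 (K := R_AbsRing) (U := R_NormedModule) (V := R_NormedModule)
    (W := C_R_NormedModule) f g (fun u v => (u, v)) x _ _ (fun u v => (u, v)) Hf Hg).
  eapply filterdiff_ext; [| eapply filterdiff_ext_lin; [apply filterdiff_id |]];
    intros [u v]; reflexivity.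
- reflexivity.
Qed.

Lemma is_derive_scal_Cexp (c z : C) (t : R) :
  is_derive (V := C_R_NormedModule) (fun s : R => (c * Cexp (z * s))%C) t (c * z * Cexp (z * t))%C.
Proof.
eapply is_derive_ext; [intro s; symmetry; apply surjective_pairing |].
rewrite (surjective_pairing (c * z * Cexp (z * t))%C).
destruct c as [c1 c2], z as [z1 z2].
apply is_derive_pair; unfold Cexp, Cmult, RtoC, Re, Im; simpl; auto_derive; auto;
  unfold Rminus; ring.
Qed.

Lemma continuous_scal_Cexp (c z : C) (t : R) :
  continuous (U := C_R_NormedModule) (fun s : R => (c * Cexp (z * s))%C) t.
Proof.
apply (ex_derive_continuous (V := C_R_NormedModule)).
eexists; apply is_derive_scal_Cexp.
Qed.

Lemma Cexp_add (a b : C) : Cexp (a + b) = (Cexp a * Cexp b)%C.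
Proof.
destruct a as [a1 a2], b as [b1 b2]; unfold Cexp, Cmult, Cplus; simpl.
rewrite exp_plus, cos_plus, sin_plus; f_equal; ring.
Qed.

Lemma Cexp_0 : Cexp 0 = 1.
Proof. unfold Cexp, RtoC; simpl. rewrite exp_0, cos_0, sin_0; f_equal; ring. Qed.

Lemma Cmod_Cexp (a : C) : Cmod (Cexp a) = exp (Re a).
Proof.
destruct a as [a1 a2]; cbv [Cmod Cexp Re Im fst snd].
replace ((exp a1 * cos a2) ^ 2 + (exp a1 * sin a2) ^ 2) with (exp a1 ^ 2).
- apply sqrt_pow2, Rlt_le, exp_pos.
- pose proof (sin2_cos2 a2) as H; unfold Rsqr in H; nra.
Qed.

Lemma scal_C (r : R) (v : C) : @scal _ C_R_NormedModule r v = (r * v)%C.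
Proof.
destruct v as [v1 v2]; unfold Cmult, RtoC; simpl.
change (@eq C (r * v1, r * v2) (r * v1 - 0 * v2, r * v2 + 0 * v1)); f_equal; ring.
Qed.

Lemma exp_le_compat (a b : R) : a <= b -> exp a <= exp b.
Proof. intros [H | ->]; [left; apply exp_increasing |]; lra. Qed.

(* 1 - e^w = - int_0^1 w e^(w s) ds, whose integrand has modulus at most |w|. *)
Lemma Cmod_1_sub_Cexp (w : C) : Re w <= 0 -> Cmod (1 - Cexp w) <= Cmod w.
Proof.
intros Hw.
assert (Hint : is_RInt (V := C_R_NormedModule) (fun s : R => (1 * w * Cexp (w * s))%C) 0 1
                 (minus (1 * Cexp (w * 1)) (1 * Cexp (w * 0)))%C).
{ apply (is_RInt_derive (V := C_R_CompleteNormedModule) (fun s : R => (1 * Cexp (w * s))%C)).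
  - intros s _; apply is_derive_scal_Cexp.
  - intros s _; apply continuous_scal_Cexp. }
assert (Hle : Cmod (1 * Cexp (w * 1) - 1 * Cexp (w * 0))%C <= (1 - 0) * Cmod w).
{ rewrite Cmod_norm.
  apply (norm_RInt_le (V := C_R_NormedModule) (fun s : R => (1 * w * Cexp (w * s))%C)
           (fun _ => Cmod w) 0 1); [lra | | exact Hint |].
  - intros s Hs; rewrite <- Cmod_norm, !Cmod_mult, Cmod_Cexp, Cmod_1.
    assert (exp (Re (w * s)%C) <= 1).
    { rewrite <- exp_0; apply exp_le_compat; destruct w as [w1 w2]; simpl in *; nra. }
    pose proof (Cmod_ge_0 w); nra.
  - apply (is_RInt_const (V := R_NormedModule)). }
replace (w * 0)%C with (RtoC 0) in Hle by ring; replace (w * 1)%C with w in Hle by ring.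
rewrite Cexp_0 in Hle.
rewrite <- Cmod_opp; replace (- (1 - Cexp w))%C with (1 * Cexp w - 1 * 1)%C by ring; lra.
Qed.

Lemma CRInt_is_RInt (f : R -> C) (a b : R) (v : C) :
  is_RInt (V := C_R_NormedModule) f a b v -> CRInt f a b = v.
Proof.
intros Hf; unfold CRInt; rewrite (surjective_pairing v); f_equal;
  apply (is_RInt_unique (V := R_CompleteNormedModule)).
- exact (is_RInt_fct_extend_fst _ _ _ _ Hf).
- exact (is_RInt_fct_extend_snd _ _ _ _ Hf).
Qed.

Definition pow1p (s t : R) : R := Rpower (t + 1) s.

Lemma pow1p_gt0 (s t : R) : 0 < pow1p s t.
Proof. apply exp_pos. Qed.

Lemma pow1p_0 (s : R) : pow1p s 0 = 1.
Proof. unfold pow1p, Rpower; rewrite Rplus_0_l, ln_1, Rmult_0_r; apply exp_0. Qed.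

Lemma Rinv_Rpower_eq_pow1p (s t : R) : / Rpower (t + 1) s = pow1p (- s) t.
Proof. unfold pow1p; rewrite Rpower_Ropp; reflexivity. Qed.

Lemma pow1p_pred (s t : R) : -1 < t -> pow1p (s - 1) t = pow1p s t / (t + 1).
Proof.
intros Ht; unfold pow1p, Rminus.
rewrite Rpower_plus, Rpower_Ropp, Rpower_1 by lra; reflexivity.
Qed.

Lemma is_derive_pow1p (s t : R) : -1 < t -> is_derive (pow1p s) t (s * pow1p (s - 1) t).
Proof.
intros Ht; apply is_derive_Reals; unfold pow1p.
rewrite <- (Rmult_1_r (s * _)).
apply (derivable_pt_lim_comp (fun u => u + 1) (fun u => Rpower u s)).
- apply is_derive_Reals; auto_derive; auto; ring.
- apply derivable_pt_lim_power; lra.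
Qed.

Lemma continuous_pow1p (s t : R) : -1 < t -> continuous (pow1p s) t.
Proof.
intros Ht; apply (ex_derive_continuous (V := R_NormedModule)).
eexists; apply is_derive_pow1p, Ht.
Qed.

Lemma pow1p_ge_inv (g x : R) : 0 <= x -> g <= 1 -> / (x + 1) <= pow1p (- g) x.
Proof.
intros Hx Hg; rewrite <- Rinv_Rpower_eq_pow1p.
apply Rinv_le_contravar; [apply exp_pos |].
rewrite <- (Rpower_1 (x + 1)) at 2 by lra; apply Rle_Rpower; lra.
Qed.

Lemma is_RInt_pow1p (g x : R) : 0 < g -> 0 <= x ->
  is_RInt (pow1p (- g - 1)) 0 x ((1 - pow1p (- g) x) / g).
Proof.
intros Hg Hx.
replace ((1 - pow1p (- g) x) / g) with (minus (- / g * pow1p (- g) x) (- / g * pow1p (- g) 0))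
  by (rewrite pow1p_0; unfold minus, plus, opp; simpl; field; lra).
apply (is_RInt_derive (V := R_CompleteNormedModule) (fun t => - / g * pow1p (- g) t));
  intros t Ht; rewrite Rmin_left, Rmax_right in Ht by lra.
- replace (pow1p (- g - 1) t) with (- / g * (- g * pow1p (- g - 1) t)) by (field; lra).
  apply is_derive_scal, is_derive_pow1p; lra.
- apply continuous_pow1p; lra.
Qed.

Definition cexp_comb (p1 p2 z1 z2 : C) (t : R) : C :=
  (p1 * Cexp (z1 * t) - p2 * Cexp (z2 * t))%C.

Lemma is_derive_cexp_comb (p1 p2 z1 z2 : C) (t : R) :
  is_derive (V := C_R_NormedModule) (cexp_comb p1 p2 z1 z2) t
    (cexp_comb (p1 * z1) (p2 * z2) z1 z2 t).
Proof. apply (is_derive_minus (V := C_R_NormedModule)); apply is_derive_scal_Cexp. Qed.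

Lemma continuous_cexp_comb (p1 p2 z1 z2 : C) (t : R) :
  continuous (U := C_R_NormedModule) (cexp_comb p1 p2 z1 z2) t.
Proof.
apply (ex_derive_continuous (V := C_R_NormedModule)).
eexists; apply is_derive_cexp_comb.
Qed.

Lemma Cmod_mul_cexp_comb_le (c p1 p2 z1 z2 : C) (t : R) :
  Cmod (c * cexp_comb p1 p2 z1 z2 t)
  <= Cmod p1 * Cmod (c * Cexp (z1 * t)) + Cmod p2 * Cmod (c * Cexp (z2 * t)).
Proof.
unfold cexp_comb.
replace (c * (p1 * Cexp (z1 * t) - p2 * Cexp (z2 * t)))%C
  with (p1 * (c * Cexp (z1 * t)) + - (p2 * (c * Cexp (z2 * t))))%C by ring.
eapply Rle_trans; [apply Cmod_triangle |]; rewrite Cmod_opp, !Cmod_mult; lra.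
Qed.

Lemma cexp_comb_0 (p1 p2 z1 z2 : C) : cexp_comb p1 p2 z1 z2 0 = (p1 - p2)%C.
Proof.
unfold cexp_comb; replace (z1 * 0)%C with (RtoC 0) by ring;
  replace (z2 * 0)%C with (RtoC 0) by ring; rewrite Cexp_0; ring.
Qed.

Section Primitives.

Variables z1 z2 : C.
Hypothesis z1_neq0 : z1 <> 0%C.
Hypothesis z2_neq0 : z2 <> 0%C.

Definition prim1 := cexp_comb (/ z1) (/ z2) z1 z2.
Definition prim2 := cexp_comb (/ (z1 * z1)) (/ (z2 * z2)) z1 z2.

Lemma is_derive_prim1 (t : R) :
  is_derive (V := C_R_NormedModule) prim1 t (cexp_comb 1 1 z1 z2 t).
Proof.
replace (cexp_comb 1 1 z1 z2 t) with (cexp_comb (/ z1 * z1) (/ z2 * z2) z1 z2 t)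
  by (rewrite !Cinv_l; auto).
apply is_derive_cexp_comb.
Qed.

Lemma is_derive_prim2 (t : R) : is_derive (V := C_R_NormedModule) prim2 t (prim1 t).
Proof.
replace (prim1 t) with (cexp_comb (/ (z1 * z1) * z1) (/ (z2 * z2) * z2) z1 z2 t).
- apply is_derive_cexp_comb.
- unfold prim1; f_equal; field; auto.
Qed.

Definition ibp_remainder (g x : R) : C :=
  RInt (V := C_R_CompleteNormedModule)
    (fun t => scal (g * (g + 1) * pow1p (- g - 2) t) (prim2 t)) 0 x.

Lemma ex_RInt_ibp_remainder (g x : R) : 0 <= x ->
  ex_RInt (V := C_R_CompleteNormedModule)
    (fun t => scal (g * (g + 1) * pow1p (- g - 2) t) (prim2 t)) 0 x.
Proof.
intros Hx; apply (ex_RInt_continuous (V := C_R_CompleteNormedModule)).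
intros t Ht; rewrite Rmin_left in Ht by lra.
apply (continuous_scal (V := C_R_NormedModule)).
- apply (continuous_scal_r (K := R_AbsRing) (V := R_NormedModule)), continuous_pow1p; lra.
- apply continuous_cexp_comb.
Qed.

Lemma is_RInt_pow1p_cexp_diff (g x : R) : 0 <= x ->
  is_RInt (V := C_R_CompleteNormedModule)
    (fun t => scal (pow1p (- g) t) (cexp_comb 1 1 z1 z2 t)) 0 x
    (pow1p (- g) x * prim1 x + (g * pow1p (- g - 1) x)%R * prim2 x
     - (prim1 0 + g * prim2 0) + ibp_remainder g x)%C.
Proof.
intros Hx.
assert (Hrange : forall t, Rmin 0 x <= t <= Rmax 0 x -> -1 < t)
  by (intros t Ht; rewrite Rmin_left in Ht; lra).
assert (Hcont : forall s k t, -1 < t -> continuous (fun u => k * pow1p s u) t).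
{ intros s k t Ht.
  apply (continuous_scal_r (K := R_AbsRing) (V := R_NormedModule)), continuous_pow1p, Ht. }
set (dw := fun t => - g * pow1p (- g - 1) t).
assert (Hdw : forall t, -1 < t -> is_derive dw t (g * (g + 1) * pow1p (- g - 2) t)).
{ intros t Ht; replace (g * (g + 1) * pow1p (- g - 2) t)
    with (- g * ((- g - 1) * pow1p (- g - 1 - 1) t))
    by (replace (- g - 1 - 1) with (- g - 2) by ring; ring).
  apply is_derive_scal, is_derive_pow1p, Ht. }
assert (Hsecond := is_RInt_scal_derive_r (V := C_R_CompleteNormedModule) dw prim2 _ prim1 0 x _
         (fun t Ht => Hdw t (Hrange t Ht)) (fun t _ => is_derive_prim2 t)
         (fun t Ht => Hcont _ _ _ (Hrange t Ht)) (fun t _ => continuous_cexp_comb _ _ _ _ t)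
         (RInt_correct _ _ _ (ex_RInt_ibp_remainder g x Hx))).
assert (Hfirst := is_RInt_scal_derive_r (V := C_R_CompleteNormedModule) (pow1p (- g)) prim1 dw
         (cexp_comb 1 1 z1 z2) 0 x _
         (fun t Ht => is_derive_pow1p _ _ (Hrange t Ht)) (fun t _ => is_derive_prim1 t)
         (fun t Ht => Hcont _ _ _ (Hrange t Ht)) (fun t _ => continuous_cexp_comb _ _ _ _ t)
         Hsecond).
fold (ibp_remainder g x) in Hfirst.
match type of Hfirst with is_RInt _ _ _ ?v => replace (_ + _)%C with v; [exact Hfirst |] end.
unfold dw; rewrite !pow1p_0.
repeat change (@minus _ ?u ?v) with (u - v)%C.
repeat change (@scal _ _ ?r ?v) with (@scal _ C_R_NormedModule r v); rewrite !scal_C.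
rewrite !RtoC_mult, RtoC_opp.
match goal with |- @eq _ ?a ?b => change (@eq C a b) end; ring.
Qed.

End Primitives.

Lemma Cmod_inv_sqr_le (z : C) (M : R) : z <> 0%C -> Cmod (/ z) <= M -> Cmod (/ (z * z)) <= M * M.
Proof.
intros Hz HM; replace (/ (z * z))%C with (/ z * / z)%C by (field; auto); rewrite Cmod_mult.
pose proof (Cmod_ge_0 (/ z)); nra.
Qed.

Lemma mul_exp_half_le (b x : R) : 0 <= b <= 1 -> 0 <= x -> b * exp (- (b * x) / 2) <= 2 / (x + 1).
Proof.
intros Hb Hx.
assert (Hy : b * x <= exp (b * x / 2)).
{ replace (b * x / 2) with (b * x / 4 + b * x / 4) by field; rewrite exp_plus.
  pose proof (exp_ineq1_le (b * x / 4)); pose proof (pow2_ge_0 (1 - b * x / 4)); nra. }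
assert (Hinv : exp (- (b * x) / 2) * exp (b * x / 2) = 1)
  by (rewrite <- exp_plus, <- exp_0; f_equal; field).
assert (Hle1 : exp (- (b * x) / 2) <= 1) by (rewrite <- exp_0; apply exp_le_compat; nra).
apply (Rmult_le_reg_r (x + 1)); [lra |]; replace (2 / (x + 1) * (x + 1)) with 2 by (field; lra).
pose proof (exp_pos (- (b * x) / 2)); nra.
Qed.

Definition damped_ibp_const (kappa M : R) : R :=
  2 * M + 2 * (M * M) + 2 * (kappa * (M * M) * (1 + 2 * M))
  + 2 * (4 * (M * M) + 2 * kappa * (M * M) * (2 * M + 1)).

Section Bounds.

Variables (z1 z2 : C) (b kappa M : R).
Hypothesis z1_neq0 : z1 <> 0%C.
Hypothesis z2_neq0 : z2 <> 0%C.
Hypothesis Cmod_inv_z1 : Cmod (/ z1) <= M.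
Hypothesis Cmod_inv_z2 : Cmod (/ z2) <= M.
Hypothesis Re_z1 : Re z1 = b.
Hypothesis Re_z2 : Re z2 = 0.
Hypothesis b_range : 0 <= b <= 1.
Hypothesis kappa_ge0 : 0 <= kappa.
Hypothesis Cmod_z2_sub_z1 : Cmod (z2 - z1) <= kappa * b.

Lemma M_ge0 : 0 <= M.
Proof. pose proof (Cmod_ge_0 (/ z1)); lra. Qed.

Lemma Cmod_inv_sub_le : Cmod (/ z1 - / z2) <= kappa * b * (M * M).
Proof.
replace (/ z1 - / z2)%C with ((z2 - z1) * (/ z1 * / z2))%C by (field; auto).
rewrite !Cmod_mult; apply Rmult_le_compat; auto using Cmod_ge_0.
- apply Rmult_le_pos; apply Cmod_ge_0.
- apply Rmult_le_compat; auto using Cmod_ge_0.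
Qed.

Lemma Cmod_inv_sqr_sub_le : Cmod (/ (z1 * z1) - / (z2 * z2)) <= kappa * b * (M * M) * (2 * M).
Proof.
replace (/ (z1 * z1) - / (z2 * z2))%C with ((/ z1 - / z2) * (/ z1 + / z2))%C by (field; auto).
rewrite Cmod_mult; apply Rmult_le_compat; auto using Cmod_ge_0, Cmod_inv_sub_le.
eapply Rle_trans; [apply Cmod_triangle | lra].
Qed.

Definition damp (x : R) : C := Cexp (- (z1 * x)).

Lemma Cmod_damp (x : R) : Cmod (damp x) = exp (- (b * x)).
Proof. unfold damp; rewrite Cmod_Cexp, re_opp, re_scal_r, Re_z1; reflexivity. Qed.

Lemma Cmod_damp_Cexp1 (x t : R) : Cmod (damp x * Cexp (z1 * t)) = exp (b * (t - x)).
Proof.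
unfold damp; rewrite <- Cexp_add, Cmod_Cexp, re_plus, re_opp, !re_scal_r, Re_z1; f_equal; ring.
Qed.

Lemma Cmod_damp_Cexp2 (x t : R) : Cmod (damp x * Cexp (z2 * t)) = exp (- (b * x)).
Proof.
rewrite Cmod_mult, Cmod_damp, Cmod_Cexp, re_scal_r, Re_z2, Rmult_0_l, exp_0; ring.
Qed.

Lemma Cmod_damp_comb_le (p1 p2 : C) (t x : R) : 0 <= t <= x ->
  Cmod (damp x * cexp_comb p1 p2 z1 z2 t) <= Cmod p1 + Cmod p2.
Proof.
intros Ht; eapply Rle_trans; [apply Cmod_mul_cexp_comb_le |].
rewrite Cmod_damp_Cexp1, Cmod_damp_Cexp2.
assert (exp (b * (t - x)) <= 1) by (rewrite <- exp_0; apply exp_le_compat; nra).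
assert (exp (- (b * x)) <= 1) by (rewrite <- exp_0; apply exp_le_compat; nra).
pose proof (Cmod_ge_0 p1); pose proof (Cmod_ge_0 p2); nra.
Qed.

Lemma Cmod_damp_prim2_le_early (t x : R) : 0 <= t -> 2 * t <= x ->
  Cmod (damp x * prim2 z1 z2 t) <= exp (- (b * x) / 2) * (kappa * b * (M * M) * (2 * M + t)).
Proof.
intros Ht Htx.
assert (Hsplit : (damp x * prim2 z1 z2 t)%C = (damp x * Cexp (z1 * t)
   * ((/ (z1 * z1) - / (z2 * z2)) + / (z2 * z2) * (1 - Cexp ((z2 - z1) * t))))%C).
{ unfold prim2, cexp_comb.
  replace (Cexp (z2 * t)) with (Cexp (z1 * t) * Cexp ((z2 - z1) * t))%C
    by (rewrite <- Cexp_add; f_equal; ring).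
  ring. }
assert (Hgap : Cmod (1 - Cexp ((z2 - z1) * t)) <= kappa * b * t).
{ eapply Rle_trans; [apply Cmod_1_sub_Cexp |].
  - rewrite re_scal_r; unfold Cminus; rewrite re_plus, re_opp, Re_z1, Re_z2; nra.
  - rewrite Cmod_mult, Cmod_R, Rabs_pos_eq by lra; apply Rmult_le_compat_r; lra. }
assert (Hsum : Cmod ((/ (z1 * z1) - / (z2 * z2)) + / (z2 * z2) * (1 - Cexp ((z2 - z1) * t)))
               <= kappa * b * (M * M) * (2 * M + t)).
{ eapply Rle_trans; [apply Cmod_triangle |]; rewrite Cmod_mult.
  pose proof Cmod_inv_sqr_sub_le; pose proof (Cmod_inv_sqr_le z2 M z2_neq0 Cmod_inv_z2).
  assert (Cmod (/ (z2 * z2)) * Cmod (1 - Cexp ((z2 - z1) * t)) <= M * M * (kappa * b * t))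
    by (apply Rmult_le_compat; auto using Cmod_ge_0).
  lra. }
rewrite Hsplit, Cmod_mult, Cmod_damp_Cexp1.
apply Rmult_le_compat; auto using Cmod_ge_0, Rlt_le, exp_pos.
apply exp_le_compat; nra.
Qed.

Lemma decay_le_pow1p (g x : R) : g <= 1 -> 0 <= x -> b * exp (- (b * x) / 2) <= 2 * pow1p (- g) x.
Proof.
intros Hg Hx; eapply Rle_trans; [apply mul_exp_half_le; auto |].
pose proof (pow1p_ge_inv g x Hx Hg); unfold Rdiv; lra.
Qed.

Lemma Cmod_damp_prim2_le_weighted (g t x : R) : g <= 1 -> 0 <= t <= x ->
  Cmod (damp x * prim2 z1 z2 t)
  <= (4 * (M * M) + 2 * kappa * (M * M) * (2 * M + 1)) * pow1p (- g) x * (t + 1).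
Proof.
intros Hg Ht.
pose proof M_ge0; set (W := pow1p (- g) x).
assert (HMM : 0 <= M * M) by nra.
destruct (Rle_lt_dec (2 * t) x) as [Hearly | Hlate].
- eapply Rle_trans; [apply Cmod_damp_prim2_le_early; lra |].
  assert (Hdec : b * exp (- (b * x) / 2) <= 2 * W) by (apply decay_le_pow1p; lra).
  assert (HW : 0 < W) by apply pow1p_gt0.
  assert (Hpoly : 0 <= kappa * (M * M)) by nra.
  assert (Hlin : 2 * M + t <= (2 * M + 1) * (t + 1)) by nra.
  replace (exp (- (b * x) / 2) * (kappa * b * (M * M) * (2 * M + t)))
    with ((b * exp (- (b * x) / 2)) * (kappa * (M * M)) * (2 * M + t)) by ring.
  assert (0 <= b * exp (- (b * x) / 2)) by (pose proof (exp_pos (- (b * x) / 2)); nra).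
  apply Rle_trans with (2 * W * (kappa * (M * M)) * ((2 * M + 1) * (t + 1))).
  + apply Rmult_le_compat; [apply Rmult_le_pos | | apply Rmult_le_compat_r |]; lra.
  + assert (0 <= 4 * (M * M) * W * (t + 1)) by (repeat apply Rmult_le_pos; lra).
    nra.
- eapply Rle_trans; [apply (Cmod_damp_comb_le _ _ t x Ht) |].
  pose proof (Cmod_inv_sqr_le z1 M z1_neq0 Cmod_inv_z1).
  pose proof (Cmod_inv_sqr_le z2 M z2_neq0 Cmod_inv_z2).
  assert (Hhalf : / 2 <= W * (t + 1)).
  { apply Rle_trans with (/ (x + 1) * (t + 1)).
    - apply (Rmult_le_reg_l (2 * (x + 1))); [lra |].
      replace (2 * (x + 1) * (/ (x + 1) * (t + 1))) with (2 * (t + 1)) by (field; lra); lra.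
    - apply Rmult_le_compat_r; [lra | apply pow1p_ge_inv; lra]. }
  assert (0 <= 2 * kappa * (M * M) * (2 * M + 1) * W * (t + 1)).
  { assert (0 < W) by apply pow1p_gt0; repeat apply Rmult_le_pos; nra. }
  nra.
Qed.

Lemma Cmod_damp_ibp_remainder_le (g x : R) : 0 < g <= 1 -> 0 <= x ->
  Cmod (damp x * ibp_remainder z1 z2 g x)
  <= 2 * (4 * (M * M) + 2 * kappa * (M * M) * (2 * M + 1)) * pow1p (- g) x.
Proof.
intros Hg Hx.
set (B := 4 * (M * M) + 2 * kappa * (M * M) * (2 * M + 1)).
set (W := pow1p (- g) x); set (e := exp (- (b * x))).
assert (HW : 0 < W) by apply pow1p_gt0; assert (He : 0 < e) by apply exp_pos.
assert (HB : 0 <= B).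
{ pose proof M_ge0; assert (0 <= kappa * (M * M)) by (apply Rmult_le_pos; nra); unfold B; nra. }
assert (Hint : Cmod (ibp_remainder z1 z2 g x) <= g * (g + 1) * (B * W / e) * ((1 - W) / g)).
{ rewrite Cmod_norm.
  apply (norm_RInt_le (V := C_R_NormedModule)
           (fun t => scal (g * (g + 1) * pow1p (- g - 2) t) (prim2 z1 z2 t))
           (fun t => g * (g + 1) * (B * W / e) * pow1p (- g - 1) t) 0 x); [lra | | |].
  - intros t Ht; rewrite scal_C, <- Cmod_norm, Cmod_mult, Cmod_R, Rabs_pos_eq
      by (pose proof (pow1p_gt0 (- g - 2) t); apply Rmult_le_pos; nra).
    assert (Hprim : Cmod (prim2 z1 z2 t) <= B * W / e * (t + 1)).
    { pose proof (Cmod_damp_prim2_le_weighted g t x ltac:(lra) Ht) as Hd.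
      rewrite Cmod_mult, Cmod_damp in Hd; fold e B W in Hd.
      apply (Rmult_le_reg_l e); [lra |].
      replace (e * (B * W / e * (t + 1))) with (B * W * (t + 1)) by (field; lra); lra. }
    replace (pow1p (- g - 1) t) with (pow1p (- g - 2) t * (t + 1))
      by (replace (- g - 2) with (- g - 1 - 1) by ring; rewrite pow1p_pred by lra; field; lra).
    pose proof (pow1p_gt0 (- g - 2) t).
    replace (g * (g + 1) * (B * W / e) * (pow1p (- g - 2) t * (t + 1)))
      with (g * (g + 1) * pow1p (- g - 2) t * (B * W / e * (t + 1))) by ring.
    apply Rmult_le_compat_l; [apply Rmult_le_pos; nra | exact Hprim].
  - apply (RInt_correct (V := C_R_CompleteNormedModule)), ex_RInt_ibp_remainder, Hx.
  - apply (is_RInt_scal (V := R_NormedModule)), is_RInt_pow1p; lra. }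
rewrite Cmod_mult, Cmod_damp; fold e.
apply Rle_trans with (e * (g * (g + 1) * (B * W / e) * ((1 - W) / g)));
  [apply Rmult_le_compat_l; lra |].
replace (e * (g * (g + 1) * (B * W / e) * ((1 - W) / g))) with ((g + 1) * (1 - W) * (B * W))
  by (field; lra).
assert (0 <= B * W) by nra; assert ((g + 1) * (1 - W) <= 2) by nra.
nra.
Qed.

Lemma Cmod_damp_ibp_boundary0_le (g x : R) : 0 < g <= 1 -> 0 <= x ->
  Cmod (damp x * (prim1 z1 z2 0 + g * prim2 z1 z2 0))
  <= 2 * (kappa * (M * M) * (1 + 2 * M)) * pow1p (- g) x.
Proof.
intros Hg Hx.
unfold prim1, prim2; rewrite !cexp_comb_0, Cmod_mult, Cmod_damp.
assert (Hsum : Cmod ((/ z1 - / z2) + g * (/ (z1 * z1) - / (z2 * z2)))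
               <= b * (kappa * (M * M) * (1 + 2 * M))).
{ eapply Rle_trans; [apply Cmod_triangle |].
  rewrite Cmod_mult, Cmod_R, Rabs_pos_eq by lra.
  pose proof Cmod_inv_sub_le; pose proof Cmod_inv_sqr_sub_le.
  pose proof (Cmod_ge_0 (/ (z1 * z1) - / (z2 * z2))).
  assert (g * Cmod (/ (z1 * z1) - / (z2 * z2)) <= kappa * b * (M * M) * (2 * M)) by nra.
  nra. }
assert (Hconst : 0 <= kappa * (M * M) * (1 + 2 * M)).
{ pose proof M_ge0; assert (0 <= kappa * (M * M)) by (apply Rmult_le_pos; nra); nra. }
assert (Hexp : b * exp (- (b * x)) <= 2 * pow1p (- g) x).
{ eapply Rle_trans; [| apply decay_le_pow1p; lra].
  apply Rmult_le_compat_l; [lra | apply exp_le_compat; nra]. }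
apply Rle_trans with (exp (- (b * x)) * (b * (kappa * (M * M) * (1 + 2 * M))));
  [apply Rmult_le_compat_l; [apply Rlt_le, exp_pos | exact Hsum] |].
nra.
Qed.

Lemma Cmod_damp_RInt_pow1p_cexp_diff_le (g x : R) : 0 < g <= 1 -> 0 <= x ->
  Cmod (damp x * RInt (V := C_R_CompleteNormedModule)
                   (fun t => scal (pow1p (- g) t) (cexp_comb 1 1 z1 z2 t)) 0 x)
  <= damped_ibp_const kappa M * pow1p (- g) x.
Proof.
intros Hg Hx; unfold damped_ibp_const.
rewrite (is_RInt_unique _ _ _ _ (is_RInt_pow1p_cexp_diff z1 z2 z1_neq0 z2_neq0 g x Hx)).
set (W := pow1p (- g) x); set (V := (g * pow1p (- g - 1) x)%R).
assert (HW : 0 < W) by apply pow1p_gt0.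
assert (HV : 0 <= V <= W).
{ unfold V; rewrite pow1p_pred by lra; fold W.
  assert (0 < W / (x + 1) <= W).
  { split; [apply Rdiv_lt_0_compat; lra |].
    apply Rmult_le_reg_r with (x + 1); [lra |].
    unfold Rdiv; rewrite Rmult_assoc, Rinv_l by lra; nra. }
  nra. }
pose proof (Cmod_damp_comb_le (/ z1) (/ z2) x x ltac:(lra)) as Hprim1.
pose proof (Cmod_damp_comb_le (/ (z1 * z1)) (/ (z2 * z2)) x x ltac:(lra)) as Hprim2.
pose proof (Cmod_inv_sqr_le z1 M z1_neq0 Cmod_inv_z1).
pose proof (Cmod_inv_sqr_le z2 M z2_neq0 Cmod_inv_z2).
pose proof (Cmod_damp_ibp_boundary0_le g x Hg Hx) as Hzero.
pose proof (Cmod_damp_ibp_remainder_le g x Hg Hx) as Hrem.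
fold W in Hzero, Hrem.
replace (damp x * (W * prim1 z1 z2 x + V * prim2 z1 z2 x - (prim1 z1 z2 0 + g * prim2 z1 z2 0)
                   + ibp_remainder z1 z2 g x))%C
  with (W * (damp x * prim1 z1 z2 x) + V * (damp x * prim2 z1 z2 x)
        + - (damp x * (prim1 z1 z2 0 + g * prim2 z1 z2 0)) + damp x * ibp_remainder z1 z2 g x)%C
  by ring.
eapply Rle_trans; [apply Cmod_triangle |].
eapply Rle_trans; [apply Rplus_le_compat_r, Cmod_triangle |].
eapply Rle_trans; [apply Rplus_le_compat_r, Rplus_le_compat_r, Cmod_triangle |].
rewrite Cmod_opp, !(Cmod_mult (RtoC _)), !Cmod_R, !Rabs_pos_eq by lra.
unfold prim1, prim2 in *.
assert (W * Cmod (damp x * cexp_comb (/ z1) (/ z2) z1 z2 x) <= W * (2 * M))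
  by (apply Rmult_le_compat_l; lra).
assert (V * Cmod (damp x * cexp_comb (/ (z1 * z1)) (/ (z2 * z2)) z1 z2 x) <= W * (2 * (M * M)))
  by (apply Rmult_le_compat; auto using Cmod_ge_0; lra).
lra.
Qed.

End Bounds.

Lemma Cmod_le_Rabs_Re_Im (z : C) : Cmod z <= Rabs (Re z) + Rabs (Im z).
Proof.
destruct z as [u v]; cbv [Cmod Re Im fst snd].
rewrite <- (sqrt_pow2 (Rabs u + Rabs v)) by (pose proof (Rabs_pos u); pose proof (Rabs_pos v); lra).
apply sqrt_le_1_alt.
rewrite <- (pow2_abs u), <- (pow2_abs v).
pose proof (Rabs_pos u); pose proof (Rabs_pos v); nra.
Qed.

Lemma Cmod_sub_RtoC_le (xi1 : C) (xi2 beta : R) : 0 <= Im xi1 ->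
  Rabs (Re xi1 - xi2) <= beta * Im xi1 -> Cmod (xi1 - xi2) <= (beta + 1) * Im xi1.
Proof.
intros Him Hgap; eapply Rle_trans; [apply Cmod_le_Rabs_Re_Im |].
destruct xi1 as [u v]; simpl in *.
replace (v + - 0) with v by ring; rewrite (Rabs_pos_eq v) by lra.
unfold Rminus in Hgap; lra.
Qed.

Lemma Cmod_opp_Ci_mul (z : C) : Cmod (- (Ci * z)) = Cmod z.
Proof. rewrite Cmod_opp, Cmod_mult, Cmod_Ci; ring. Qed.

Lemma Re_opp_Ci_mul (z : C) : Re (- (Ci * z)) = Im z.
Proof. destruct z; simpl; ring. Qed.

Lemma neq0_of_Cmod_ge (z : C) (eps : R) : 0 < eps -> eps <= Cmod z -> z <> 0%C.
Proof. intros Heps Hz ->; rewrite Cmod_0 in Hz; lra. Qed.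

Lemma Cmod_inv_le (z : C) (eps : R) : 0 < eps -> eps <= Cmod z -> Cmod (/ z) <= / eps.
Proof.
intros Heps Hz; rewrite Cmod_inv by (apply (neq0_of_Cmod_ge z eps); auto).
apply Rinv_le_contravar; lra.
Qed.

Lemma CRInt_weighted_Cexp_diff (xi1 : C) (xi2 gamma x : R) :
  (- (Ci * xi1))%C <> 0%C -> (- (Ci * xi2))%C <> 0%C -> 0 <= x ->
  CRInt (fun t =>
           Cmult (Cminus (Cexp (Copp (Cmult Ci (Cmult xi1 (RtoC t)))))
                         (Cexp (Copp (Cmult Ci (RtoC (xi2 * t))))))
                 (RtoC (/ Rpower (t + 1) gamma))) 0 x
  = RInt (V := C_R_CompleteNormedModule)
      (fun t => scal (pow1p (- gamma) t) (cexp_comb 1 1 (- (Ci * xi1)) (- (Ci * xi2)) t)%C) 0 x.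
Proof.
intros Hz1 Hz2 Hx; apply CRInt_is_RInt.
apply (is_RInt_ext (V := C_R_NormedModule)
         (fun t => scal (pow1p (- gamma) t) (cexp_comb 1 1 (- (Ci * xi1)) (- (Ci * xi2)) t)%C)).
- intros t _; symmetry; rewrite scal_C, Rinv_Rpower_eq_pow1p, RtoC_mult; unfold cexp_comb.
  replace (- (Ci * (xi1 * t)))%C with (- (Ci * xi1) * t)%C by ring.
  replace (- (Ci * (xi2 * t)))%C with (- (Ci * xi2) * t)%C by ring.
  match goal with |- @eq _ ?a ?b => change (@eq C a b) end; ring.
- apply (RInt_correct (V := C_R_CompleteNormedModule)).
  eexists; apply is_RInt_pow1p_cexp_diff; auto.
Qed.

Theorem lemma3p3 (gamma eps beta : R) :
  1/2 < gamma <= 1 -> 0 < eps -> 0 < beta ->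
  exists c2 : R,
    forall (xi1 : C) (xi2 : R),
      0 <= Im xi1 <= 1 ->
      eps <= Cmod xi1 ->
      eps <= Rabs xi2 ->
      Rabs (Re xi1 - xi2) <= beta * Im xi1 ->
      forall x : R, 0 <= x ->
        Cmod (Cmult (Cexp (Cmult Ci (Cmult xi1 (RtoC x))))
               (CRInt (fun t =>
                  Cmult (Cminus (Cexp (Copp (Cmult Ci (Cmult xi1 (RtoC t)))))
                                (Cexp (Copp (Cmult Ci (RtoC (xi2 * t))))))
                        (RtoC (/ Rpower (t + 1) gamma))) 0 x))
        < c2 / Rpower (x + 1) gamma.
Proof.
intros Hgamma Heps Hbeta.
exists (damped_ibp_const (beta + 1) (/ eps) + 1).
intros xi1 xi2 Him Hxi1 Hxi2 Hgap x Hx.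
set (z1 := (- (Ci * xi1))%C); set (z2 := (- (Ci * xi2))%C).
assert (Hz1 : eps <= Cmod z1) by (unfold z1; rewrite Cmod_opp_Ci_mul; lra).
assert (Hz2 : eps <= Cmod z2) by (unfold z2; rewrite Cmod_opp_Ci_mul, Cmod_R; lra).
assert (Hdiff : Cmod (z2 - z1) <= (beta + 1) * Im xi1).
{ replace (z2 - z1)%C with (Ci * (xi1 - xi2))%C by (unfold z1, z2; ring).
  rewrite Cmod_mult, Cmod_Ci, Rmult_1_l; apply Cmod_sub_RtoC_le; lra. }
rewrite CRInt_weighted_Cexp_diff by (try apply (neq0_of_Cmod_ge _ eps); assumption).
replace (Ci * (xi1 * x))%C with (- (z1 * x))%C by (unfold z1; ring).
eapply Rle_lt_trans.
- apply (Cmod_damp_RInt_pow1p_cexp_diff_le z1 z2 (Im xi1) (beta + 1) (/ eps));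
    try (apply (neq0_of_Cmod_ge _ eps); assumption); try (apply Cmod_inv_le; assumption);
    try apply Re_opp_Ci_mul; lra.
- unfold Rdiv; rewrite Rinv_Rpower_eq_pow1p.
  pose proof (pow1p_gt0 (- gamma) x); lra.
Qed.
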